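(* In any execution of $\mathcal{U}$, for every operation $o$: if $h(o) = (t(o), NULL)$ at time $T$ and $o$ is not done at time $T' \geq T$, then $h(o) = (t(o), NULL)$ throughout the interval $[T, T']$.
   Context: Model: an asynchronous shared-memory system with possibly infinitely many processes, any of which may crash, communicating via atomic shared objects. A fetch-and-increment (F\&I) object stores an integer; F\&I$(C)$ atomically returns the current value and increments it. A generalized-compare-and-swap (GCAS) object $O$ stores a value and supports Read$(O)$ and GCAS$(c, O, v_1, v_2)$, which atomically does: if $c(\text{current value of } O, v_1)$ holds then set $O := v_2$ and return true, else return false. Tuples are compared componentwise for $=$; GCAS$(>, A, (t,-,-), v)$ succeeds iff the time field of $A$ is strictly greater than $t$. Implemented type $\mathcal{T} = (OP, RES, Q, \delta)$ with initial state $s_0$; a procedure $apply_{\mathcal{T}}(o,s)$ returns some $(s',r)$ with $(s,o,s',r)\in\delta$. $NULL$ is a value different from every response of $\mathcal{T}$, and $NOOP$ is a name different from every operation of $\mathcal{T}$. Algorithm $\mathcal{U}$: each process $p$ owns a GCAS object $H_p$ with fields $(time, response)$. Shared objects: F\&I object $C$, initially $1$; GCAS object $A$ with fields $(time, op, ptr)$, initially $(0, NOOP, h(NOOP))$, where $h(NOOP)$ is a pointer to an immutable location containing $(0,\perp)$; GCAS object $S$ with fields $(time, state, response, ptr)$, initially $(0, s_0, \perp, h(NOOP))$. Process $p$ performs operation $o$ by calling DoOp$(o)$: (1) DoOp$(o)$ invoked; (2) $t := $ F\&I$(C)$; (3) $H_p := (t, NULL)$; (4) while $H_p = (t, NULL)$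 do: (5) $(t^*, s^*, r^*, roptr^* ) := S$; (6) GCAS$(=, *roptr^*, (t^*, NULL), (t^*, r^* ))$; (7) GCAS$(>, A, (t,-,-), (t, o, \&H_p))$; (8) $(t', o', roptr') := A$; (9) $(\hat t, \hat r) := *roptr'$; (10) if $(\hat t,\hat r) = (t', NULL)$ then (11) $(s', r') := apply_{\mathcal{T}}(o', s^* )$; (12) GCAS$(=, S, (t^*,s^*,r^*,roptr^* ), (t', s', r', roptr'))$; (13) else GCAS$(=, A, (t', o', roptr'), (t, o, \&H_p))$; end while; (14) return $H_p.response$. Notation: an ''operation'' $o$ means one invocation of DoOp$(o)$. $p(o)$ is the process executing it; $t(o)$ is the value returned by its F\&I at line 2, or $\infty$ if line 2 has not been executed; $h(o)$ is $H_{p(o)}$. Operation $o$ is done at time $T$ if at some time $T'\le T$, $h(o) = (t(o), r)$ with $r \neq NULL$. *)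

(* Operational model of algorithm U (asynchronous interleaving
   semantics, every shared-memory access is one atomic step). *)
From Stdlib Require Import Arith.
Set Implicit Arguments.

Section AlgorithmU.
(* P : process identifiers (possibly infinitely many);
   OP, RES, Q : operations, responses and states of the implemented type T;
   s0 : initial state;  apply : the procedure apply_T. *)
Variables (P OP RES Q : Type) (s0 : Q) (apply : OP -> Q -> Q * RES).

Inductive Val := VNull | VBot | VRes (r : RES).

(* Pointers: either h(NOOP) (immutable location containing (0, bottom)) or &H_q. *)
Inductive Ptr := PNoop | PH (q : P).

(* Program counter: Idle = between operations; Lk = about to execute line k. *)
Inductive PC := Idle | L2 | L3 | L4 | L5 | L6 | L7 | L8 | L9 | L10 | L11 | L12 | L13 | L14.

(* Local state of a process.  lop : operation of the current DoOp (None = NOOP,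
   only before the first invocation); idx : index of the current (or next)
   invocation of DoOp by this process; lt : t;  rdS : (t*, s*, r*, roptr* ) ;
   rdA : (t', o', roptr');  rdR : (t^, r^);  app : (s', r'). *)
Record Local := mkLocal {
  pc : PC;
  idx : nat;
  lop : option OP;
  lt : nat;
  rdS : nat * Q * Val * Ptr;
  rdA : nat * option OP * Ptr;
  rdR : nat * Val;
  app : Q * Val }.

(* Shared memory: C, A = (time, op, ptr) with op None = NOOP,
   S = (time, state, response, ptr), H_p for each process p, plus locals. *)
Record Config := mkConfig {
  cC : nat;
  cA : nat * option OP * Ptr;
  cS : nat * Q * Val * Ptr;
  cH : P -> nat * Val;
  cL : P -> Local }.

Definition deref (c : Config) (x : Ptr) : nat * Val :=
  match x with PNoop => (0, VBot) | PH q => cH c q end.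

Definition init (c : Config) : Prop :=
  cC c = 1 /\ cA c = (0, None, PNoop) /\ cS c = (0, s0, VBot, PNoop) /\
  (forall p, cH c p = (0, VBot)) /\
  (forall p, pc (cL c p) = Idle /\ idx (cL c p) = 0).

Definition updH (H : P -> nat * Val) (q : P) (v : nat * Val) (H' : P -> nat * Val) :=
  H' q = v /\ forall x, x <> q -> H' x = H x.

Definition sameC (c c' : Config) := cC c' = cC c.
Definition sameA (c c' : Config) := cA c' = cA c.
Definition sameS (c c' : Config) := cS c' = cS c.
Definition sameH (c c' : Config) := cH c' = cH c.

Definition apply_step (o : option OP) (s : Q) : Q * Val :=
  match o with
  | Some o => let (s', r) := apply o s in (s', VRes r)
  | None => (s, VBot) (* never used: A never holds NOOP with a NULL-marked pointer *)
  end.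

Definition step (p : P) (c c' : Config) : Prop :=
  let l := cL c p in
  let l' := cL c' p in
  (forall q, q <> p -> cL c' q = cL c q) /\
  match pc l with
  | Idle => (* (1) invocation of DoOp(o), for an arbitrary o *)
      (exists o, l' = mkLocal L2 (idx l) (Some o) (lt l) (rdS l) (rdA l) (rdR l) (app l))
      /\ sameC c c' /\ sameA c c' /\ sameS c c' /\ sameH c c'
  | L2 => (* t := F&I(C) *)
      l' = mkLocal L3 (idx l) (lop l) (cC c) (rdS l) (rdA l) (rdR l) (app l)
      /\ cC c' = cC c + 1 /\ sameA c c' /\ sameS c c' /\ sameH c c'
  | L3 => (* H_p := (t, NULL) *)
      l' = mkLocal L4 (idx l) (lop l) (lt l) (rdS l) (rdA l) (rdR l) (app l)
      /\ updH (cH c) p (lt l, VNull) (cH c')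
      /\ sameC c c' /\ sameA c c' /\ sameS c c'
  | L4 => (* while H_p = (t, NULL) *)
      (cH c p = (lt l, VNull) ->
         l' = mkLocal L5 (idx l) (lop l) (lt l) (rdS l) (rdA l) (rdR l) (app l))
      /\ (cH c p <> (lt l, VNull) ->
         l' = mkLocal L14 (idx l) (lop l) (lt l) (rdS l) (rdA l) (rdR l) (app l))
      /\ sameC c c' /\ sameA c c' /\ sameS c c' /\ sameH c c'
  | L5 => (* (t*, s*, r*, roptr* ) := S *)
      l' = mkLocal L6 (idx l) (lop l) (lt l) (cS c) (rdA l) (rdR l) (app l)
      /\ sameC c c' /\ sameA c c' /\ sameS c c' /\ sameH c c'
  | L6 => (* GCAS(=, *roptr*, (t*, NULL), (t*, r* )) *)
      l' = mkLocal L7 (idx l) (lop l) (lt l) (rdS l) (rdA l) (rdR l) (app l)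
      /\ sameC c c' /\ sameA c c' /\ sameS c c'
      /\ (let '(ts, _, rs, rp) := rdS l in
          match rp with
          | PNoop => sameH c c'  (* h(NOOP) is immutable and holds (0, bottom) *)
          | PH q => (cH c q = (ts, VNull) /\ updH (cH c) q (ts, rs) (cH c'))
                    \/ (cH c q <> (ts, VNull) /\ sameH c c')
          end)
  | L7 => (* GCAS(>, A, (t,-,-), (t, o, &H_p)) *)
      l' = mkLocal L8 (idx l) (lop l) (lt l) (rdS l) (rdA l) (rdR l) (app l)
      /\ sameC c c' /\ sameS c c' /\ sameH c c'
      /\ ((lt l < fst (fst (cA c)) /\ cA c' = (lt l, lop l, PH p))
          \/ (~ lt l < fst (fst (cA c)) /\ sameA c c'))
  | L8 => (* (t', o', roptr') := A *)
      l' = mkLocal L9 (idx l) (lop l) (lt l) (rdS l) (cA c) (rdR l) (app l)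
      /\ sameC c c' /\ sameA c c' /\ sameS c c' /\ sameH c c'
  | L9 => (* (t^, r^) := *roptr' *)
      l' = mkLocal L10 (idx l) (lop l) (lt l) (rdS l) (rdA l) (deref c (snd (rdA l))) (app l)
      /\ sameC c c' /\ sameA c c' /\ sameS c c' /\ sameH c c'
  | L10 => (* if (t^, r^) = (t', NULL) *)
      (rdR l = (fst (fst (rdA l)), VNull) ->
         l' = mkLocal L11 (idx l) (lop l) (lt l) (rdS l) (rdA l) (rdR l) (app l))
      /\ (rdR l <> (fst (fst (rdA l)), VNull) ->
         l' = mkLocal L13 (idx l) (lop l) (lt l) (rdS l) (rdA l) (rdR l) (app l))
      /\ sameC c c' /\ sameA c c' /\ sameS c c' /\ sameH c c'
  | L11 => (* (s', r') := apply_T(o', s* ) *)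
      l' = mkLocal L12 (idx l) (lop l) (lt l) (rdS l) (rdA l) (rdR l)
             (apply_step (snd (fst (rdA l))) (snd (fst (fst (rdS l)))))
      /\ sameC c c' /\ sameA c c' /\ sameS c c' /\ sameH c c'
  | L12 => (* GCAS(=, S, (t*, s*, r*, roptr* ), (t', s', r', roptr')) *)
      l' = mkLocal L4 (idx l) (lop l) (lt l) (rdS l) (rdA l) (rdR l) (app l)
      /\ sameC c c' /\ sameA c c' /\ sameH c c'
      /\ ((cS c = rdS l /\
             cS c' = (fst (fst (rdA l)), fst (app l), snd (app l), snd (rdA l)))
          \/ (cS c <> rdS l /\ sameS c c'))
  | L13 => (* GCAS(=, A, (t', o', roptr'), (t, o, &H_p)) *)
      l' = mkLocal L4 (idx l) (lop l) (lt l) (rdS l) (rdA l) (rdR l) (app l)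
      /\ sameC c c' /\ sameS c c' /\ sameH c c'
      /\ ((cA c = rdA l /\ cA c' = (lt l, lop l, PH p))
          \/ (cA c <> rdA l /\ sameA c c'))
  | L14 => (* return H_p.response; the operation completes *)
      l' = mkLocal Idle (S (idx l)) (lop l) (lt l) (rdS l) (rdA l) (rdR l) (app l)
      /\ sameC c c' /\ sameA c c' /\ sameS c c' /\ sameH c c'
  end.

(* An execution: configurations ex i at times i = 0,1,2,..., where between
   times i and i+1 either process p takes one step (lab i = Some p) or nothing
   happens (lab i = None; this covers finite executions and crashed processes). *)
Definition execution (ex : nat -> Config) (lab : nat -> option P) : Prop :=
  init (ex 0) /\
  forall i, match lab i with
            | None => ex (S i) = ex i
            | Some p => step p (ex i) (ex (S i))
            end.

(* Operations are identified by (p, k): the k-th invocation of DoOp by p.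
   tval ex lab p k v : t(o) = v, i.e. the F&I of line 2 of o returned v.
   If no such v exists, t(o) = infinity. *)
Definition tval (ex : nat -> Config) (lab : nat -> option P) (p : P) (k v : nat) : Prop :=
  exists i, lab i = Some p /\ pc (cL (ex i) p) = L2 /\ idx (cL (ex i) p) = k
            /\ cC (ex i) = v.

Definition done (ex : nat -> Config) (lab : nat -> option P) (p : P) (k T : nat) : Prop :=
  exists v, tval ex lab p k v /\
  exists T0 r, T0 <= T /\ cH (ex T0) p = (v, r) /\ r <> VNull.

End AlgorithmU.

From Stdlib Require Import Arith Lia Classical.

(* Only two kinds of steps write H_p: the owner's line 3, and a helping GCAS at
   line 6, which replaces (t, NULL) by (t, r) for the response r last read from
   S and so never changes the time field.  Hence, as long as H_p = (t(o), NULL),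
   the next step either leaves it alone or installs such an r, which is not NULL
   because S never holds a NULL response.  Line 3 is harmless: while the owner
   is outside its loop, the response field of H_p is not NULL.  Both facts are
   packaged in an invariant of all reachable configurations. *)

Section AlgorithmU.
Variables (P OP RES Q : Type) (s0 : Q) (apply : OP -> Q -> Q * RES).

Local Notation Config := (Config P OP RES Q).
Local Notation NULL := (VNull RES).

Definition local_inv (c : Config) (r : P) : Prop :=
  match pc (cL c r) with
  | Idle | L2 | L3 | L14 => snd (cH c r) <> NULL
  | L6 => fst (cH c r) = lt (cL c r) /\ snd (fst (rdS (cL c r))) <> NULL
  | L12 => fst (cH c r) = lt (cL c r) /\ snd (app (cL c r)) <> NULL
  | _ => fst (cH c r) = lt (cL c r)
  end.

Definition config_inv (c : Config) : Prop :=
  snd (fst (cS c)) <> NULL /\ forall r, local_inv c r.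

Lemma apply_step_not_null (o : option OP) (s : Q) : snd (apply_step apply o s) <> NULL.
Proof.
  destruct o as [o|]; simpl; [destruct (apply o s)|]; discriminate.
Qed.

Lemma step_cL_other {q r : P} {c c' : Config} :
  step apply q c c' -> r <> q -> cL c' r = cL c r.
Proof. intros [Hother _]; exact (Hother r). Qed.

Lemma step_cH {q : P} {c c' : Config} (r : P) :
  step apply q c c' -> ~ (r = q /\ pc (cL c q) = L3) ->
  cH c' r = cH c r \/ (snd (cH c r) = NULL /\ fst (cH c' r) = fst (cH c r)).
Proof.
  intros [_ Hst] Hnot; cbv zeta in Hst; unfold sameC, sameA, sameS, sameH in Hst.
  destruct (pc (cL c q)) eqn:E;
    try (left; repeat match goal with H : _ /\ _ |- _ => destruct H end;
         match goal with H : cH c' = cH c |- _ => rewrite H end; reflexivity).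
  - destruct Hst as [_ [[_ Hupd] _]].
    left; apply Hupd; intros ->; tauto.
  - destruct Hst as [_ [_ [_ [_ Hgcas]]]].
    destruct (rdS (cL c q)) as [[[ts s] rs] [|x]].
    + left; now rewrite Hgcas.
    + destruct Hgcas as [[Hnull [Hx Hupd]] | [_ Hsame]].
      * destruct (classic (r = x)) as [-> | Hne].
        -- right; rewrite Hnull, Hx; auto.
        -- left; auto.
      * left; now rewrite Hsame.
Qed.

Lemma step_cS {q : P} {c c' : Config} :
  step apply q c c' ->
  cS c' = cS c \/ (pc (cL c q) = L12 /\ snd (fst (cS c')) = snd (app (cL c q))).
Proof.
  intros [_ Hst]; cbv zeta in Hst; unfold sameC, sameA, sameS, sameH in Hst.
  destruct (pc (cL c q)) eqn:E;
    try (left; repeat match goal with H : _ /\ _ |- _ => destruct H end;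
         match goal with H : cS c' = cS c |- _ => exact H end).
  destruct Hst as [_ [_ [_ [_ [[_ HS] | [_ HS]]]]]].
  - right; rewrite HS; auto.
  - left; exact HS.
Qed.

Lemma local_inv_step_other {q r : P} {c c' : Config} :
  step apply q c c' -> r <> q -> local_inv c r -> local_inv c' r.
Proof.
  intros Hstep Hne Hr; unfold local_inv in *.
  rewrite (step_cL_other Hstep Hne).
  destruct (step_cH r Hstep) as [-> | [Hnull Hfst]]; [tauto | exact Hr |].
  destruct (pc (cL c r)); rewrite ?Hfst; tauto.
Qed.

Lemma local_inv_step_self {q : P} {c c' : Config} :
  config_inv c -> step apply q c c' -> local_inv c' q.
Proof.
  intros [HS Hinv] Hstep.
  assert (Hq := Hinv q).
  assert (Hframe : pc (cL c q) <> L3 ->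
            cH c' q = cH c q \/ (snd (cH c q) = NULL /\ fst (cH c' q) = fst (cH c q))).
  { intros HL3; apply (step_cH q Hstep); tauto. }
  assert (Hfst : pc (cL c q) <> L3 -> fst (cH c' q) = fst (cH c q)).
  { intros HL3; destruct (Hframe HL3) as [-> | [_ ->]]; reflexivity. }
  assert (Hset : pc (cL c q) <> L3 -> snd (cH c q) <> NULL -> snd (cH c' q) <> NULL).
  { intros HL3; destruct (Hframe HL3) as [-> | [Hnull _]]; tauto. }
  destruct Hstep as [_ Hst]; cbv zeta in Hst; unfold updH, sameC, sameA, sameS, sameH in Hst.
  unfold local_inv in Hq |- *.
  destruct (pc (cL c q)) eqn:E;
    try (lazymatch type of Hst with
         | (exists o, _) /\ _ => destruct Hst as [[o Hl] _]
         | _ => destruct Hst as [Hl _]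
         end; rewrite Hl; cbn;
         solve [ apply Hset; [congruence | tauto]
               | rewrite Hfst by congruence; tauto ]).
  - destruct Hst as [Hl [[Hq' _] _]].
    rewrite Hl, Hq'; reflexivity.
  - destruct Hst as [Hloop [Hexit [_ [_ [_ HH]]]]].
    rewrite HH; destruct (cH c q) as [t x]; simpl in Hq |- *; subst t.
    destruct x;
      [rewrite (Hloop eq_refl); reflexivity | rewrite Hexit by discriminate; discriminate ..].
  - destruct Hst as [Hthen [Helse _]].
    destruct (classic (rdR (cL c q) = (fst (fst (rdA (cL c q))), NULL))) as [Hc | Hc];
      [rewrite (Hthen Hc) | rewrite (Helse Hc)]; cbn;
      rewrite Hfst by congruence; assumption.
  - destruct Hst as [Hl _]; rewrite Hl; cbn.
    split; [rewrite Hfst by congruence; assumption | apply apply_step_not_null].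
Qed.

Lemma config_inv_step {q : P} {c c' : Config} :
  config_inv c -> step apply q c c' -> config_inv c'.
Proof.
  intros Hc Hstep; split.
  - destruct (step_cS Hstep) as [-> | [HL12 ->]]; [apply Hc |].
    assert (Hq := proj2 Hc q); unfold local_inv in Hq; rewrite HL12 in Hq; tauto.
  - intros r; destruct (classic (r = q)) as [-> | Hne].
    + exact (local_inv_step_self Hc Hstep).
    + exact (local_inv_step_other Hstep Hne (proj2 Hc r)).
Qed.

Lemma config_inv_init {c : Config} : init s0 c -> config_inv c.
Proof.
  intros [_ [_ [HS [HH HL]]]]; split.
  - rewrite HS; discriminate.
  - intros r; unfold local_inv; rewrite (proj1 (HL r)), HH; discriminate.
Qed.

Lemma execution_config_inv {ex : nat -> Config} {lab : nat -> option P} :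
  execution s0 apply ex lab -> forall i, config_inv (ex i).
Proof.
  intros [Hinit Hstep] i; induction i as [|i IH].
  - exact (config_inv_init Hinit).
  - specialize (Hstep i); destruct (lab i) as [q|].
    + exact (config_inv_step IH Hstep).
    + rewrite Hstep; exact IH.
Qed.

Lemma step_pending_time {q r : P} {c c' : Config} :
  config_inv c -> step apply q c c' -> snd (cH c r) = NULL ->
  fst (cH c' r) = fst (cH c r).
Proof.
  intros [_ Hinv] Hstep Hnull.
  destruct (step_cH r Hstep) as [-> | [_ ->]]; [| reflexivity | reflexivity].
  intros [-> HL3]; specialize (Hinv q); unfold local_inv in Hinv; rewrite HL3 in Hinv.
  contradiction.
Qed.

Lemma execution_pending_step {ex : nat -> Config} {lab : nat -> option P}
  (p : P) {i v : nat} :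
  execution s0 apply ex lab -> cH (ex i) p = (v, NULL) ->
  exists x, cH (ex (S i)) p = (v, x).
Proof.
  intros Hex Hi.
  assert (Hinv := execution_config_inv Hex i).
  assert (Htime : fst (cH (ex (S i)) p) = v).
  { destruct Hex as [_ Hstep]; specialize (Hstep i); destruct (lab i) as [q|].
    - rewrite (step_pending_time Hinv Hstep) by (rewrite Hi; reflexivity).
      rewrite Hi; reflexivity.
    - rewrite Hstep, Hi; reflexivity. }
  exists (snd (cH (ex (S i)) p)); rewrite <- Htime; apply surjective_pairing.
Qed.

End AlgorithmU.

Arguments execution_pending_step {P OP RES Q s0 apply ex lab} p {i v}.

Theorem mainTheorem8 (P OP RES Q : Type) (s0 : Q) (apply : OP -> Q -> Q * RES)
  (ex : nat -> Config P OP RES Q) (lab : nat -> option P) :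
  execution s0 apply ex lab ->
  forall (p : P) (k v T T' : nat),
    tval ex lab p k v ->
    cH (ex T) p = (v, VNull RES) ->
    T <= T' ->
    ~ done ex lab p k T' ->
    forall i, T <= i <= T' -> cH (ex i) p = (v, VNull RES).
Proof.
  intros Hex p k v T T' Ht HT _ Hnd i [HTi HiT'].
  assert (Hnull : forall j x, j <= T' -> cH (ex j) p = (v, x) -> x = VNull RES).
  { intros j x Hj Hx; apply NNPP; intros Hne.
    apply Hnd; exists v; split; [exact Ht |]; exists j, x; auto. }
  induction i as [|i IH].
  - replace T with 0 in HT by lia; exact HT.
  - destruct (Nat.eq_dec T (S i)) as [<- | Hne]; [exact HT |].
    destruct (execution_pending_step p Hex (IH ltac:(lia) ltac:(lia))) as [x Hx].
    rewrite Hx, (Hnull _ _ HiT' Hx); reflexivity.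
Qed.
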